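(* Let $G$ be a finite group, let $s: G \to \mathbb{Z}_2=\{0,1\}$ be a group homomorphism, and let $\lambda: G\times G\to \mathbb{Z}_2$ be a 2-cocycle (i.e. $\lambda(\mathbf{h},\mathbf{k})-\lambda(\mathbf{g}\mathbf{h},\mathbf{k})+\lambda(\mathbf{g},\mathbf{h}\mathbf{k})-\lambda(\mathbf{g},\mathbf{h})=0 \bmod 2$ for all $\mathbf{g},\mathbf{h},\mathbf{k}\in G$) normalized so that $\lambda(\mathbf{1},\mathbf{g})=\lambda(\mathbf{g},\mathbf{1})=0$. Let $G_f=\{\mathbf{g}_\sigma : \mathbf{g}\in G,\ \sigma\in\mathbb{Z}_2\}$ with multiplication $\mathbf{g}_\sigma\mathbf{h}_\tau=(\mathbf{g}\mathbf{h})_{\sigma+\tau+\lambda(\mathbf{g},\mathbf{h})}$, and put $P_f=\mathbf{1}_1$ and $s(\mathbf{g}_\sigma)=s(\mathbf{g})$. Then the following are equivalent: (i) there is NO function $U: G_f\to U(1)$ with $U(\mathbf{1}_0)=1$, $U(P_f)=-1$, and $U(\mathbf{g}_\sigma)\,K^{s(\mathbf{g})}[U(\mathbf{h}_\tau)] = U\big((\mathbf{g}\mathbf{h})_{\sigma+\tau+\lambda(\mathbf{g},\mathbf{h})}\big)$ for all $\mathbf{g}_\sigma,\mathbf{h}_\tau\in G_f$ (i.e. no one-dimensional unitary/antiunitary representation $\mathbf{g}_\sigma\mapsto U(\mathbf{g}_\sigma)K^{s(\mathbf{g})}$ of $G_f$ in which $P_f$ acts as $-1$); (ii) the function $(\mathbf{g},\mathbf{h})\mapsto(-1)^{\lambda(\mathbf{g},\mathbf{h})}$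 represents a non-trivial class in $\mathcal{H}^2(G,U_T(1))$.
   Context: $K$ denotes complex conjugation, $K[z]=\bar z$, and $K^0$ is the identity; $s(\mathbf{g})=1$ means $\mathbf{g}$ acts antiunitarily. $\mathcal{H}^2(G,U_T(1))$ is the second cohomology group of $G$ with coefficients in $U(1)$ on which $\mathbf{g}$ acts by $z\mapsto K^{s(\mathbf{g})}[z]$: a 2-cocycle is a function $\alpha:G\times G\to U(1)$ with $\alpha(\mathbf{g},\mathbf{h})\alpha(\mathbf{g}\mathbf{h},\mathbf{k})=\alpha(\mathbf{g},\mathbf{h}\mathbf{k})K^{s(\mathbf{g})}[\alpha(\mathbf{h},\mathbf{k})]$, and it is trivial if $\alpha(\mathbf{g},\mathbf{h})=\epsilon(\mathbf{g})K^{s(\mathbf{g})}[\epsilon(\mathbf{h})]/\epsilon(\mathbf{g}\mathbf{h})$ for some function $\epsilon:G\to U(1)$. In the paper, condition (i) is phrased as ''$G_f$ is enforced to break by the 0D complex-fermion invertible topological order'' (a unique ground state that is odd under the fermion parity $P_f$). *)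

From HB Require Import structures.
From mathcomp Require Import all_boot all_order all_algebra all_fingroup.
From mathcomp Require Import complex.
From mathcomp Require Import reals.
Set Implicit Arguments. Unset Strict Implicit. Unset Printing Implicit Defensive.
Import Order.TTheory GRing.Theory Num.Theory.
Local Open Scope ring_scope.

Definition conjK (C : numClosedFieldType) (b : bool) (z : C) : C :=
  if b then z^* else z.

(* The fermionic extension G_f = G x Z_2, element g_sigma encoded as (g, sigma),
   with product g_sigma h_tau = (gh)_{sigma + tau + lambda(g,h)}. *)
Definition gf_mul (gT : finGroupType) (lam : gT -> gT -> bool)
  (x y : gT * bool) : gT * bool :=
  ((x.1 * y.1)%g, x.2 (+) y.2 (+) lam x.1 y.1).

Definition unimod (C : numClosedFieldType) (T : Type) (f : T -> C) : Prop :=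
  forall x, `|f x| = 1.

Definition is_UT_cocycle (gT : finGroupType) (C : numClosedFieldType)
  (s : gT -> bool) (alpha : gT -> gT -> C) : Prop :=
  (forall g h, `|alpha g h| = 1) /\
  forall g h k, alpha g h * alpha (g * h)%g k = alpha g (h * k)%g * conjK (s g) (alpha h k).

Definition is_UT_coboundary (gT : finGroupType) (C : numClosedFieldType)
  (s : gT -> bool) (alpha : gT -> gT -> C) : Prop :=
  exists eps : gT -> C, unimod eps /\
    forall g h, alpha g h = eps g * conjK (s g) (eps h) / eps (g * h)%g.

Definition nontrivial_H2_class (gT : finGroupType) (C : numClosedFieldType)
  (s : gT -> bool) (alpha : gT -> gT -> C) : Prop :=
  is_UT_cocycle s alpha /\ ~ is_UT_coboundary s alpha.

From HB Require Import structures.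
From mathcomp Require Import all_boot all_order all_algebra all_fingroup.
From mathcomp Require Import complex.
From mathcomp Require Import reals.

Set Implicit Arguments.
Unset Strict Implicit.
Unset Printing Implicit Defensive.
Import Order.TTheory GRing.Theory Num.Theory.
Local Open Scope ring_scope.

(* A representation U of G_f with U(P_f) = -1 satisfies U(g_1) = -U(g_0), so it
   is determined by eps g := U(g_0); multiplicativity of U on G_f then says
   exactly that eps g K^{s g}[eps h] / eps (gh) = (-1)^lam(g,h), i.e. that eps
   trivializes the sign cocycle.  Conversely a trivializing eps with eps 1 = 1
   gives U(g_sigma) := (-1)^sigma eps g.  Hence (i) is the negation of
   "(-1)^lam is a coboundary", and (-1)^lam is always a U_T(1) cocycle. *)

Lemma conjKM (C : numClosedFieldType) (b : bool) (x y : C) :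
  conjK b (x * y) = conjK b x * conjK b y.
Proof. by case: b; rewrite /conjK ?rmorphM. Qed.

Lemma conjK_sign (C : numClosedFieldType) (b : bool) (n : nat) :
  conjK b ((-1) ^+ n) = (-1) ^+ n :> C.
Proof. by case: b; rewrite /conjK ?rmorphXn ?rmorphN1. Qed.

Lemma unimod_neq0 (C : numClosedFieldType) (T : Type) (f : T -> C) (x : T) :
  unimod f -> f x != 0.
Proof. by move=> f_unimod; rewrite -normr_eq0 f_unimod oner_neq0. Qed.

Section SignCocycle.

Variables (C : numClosedFieldType) (gT : finGroupType).
Variables (s : gT -> bool) (lam : gT -> gT -> bool).
Hypothesis s_hom : forall g h : gT, s (g * h)%g = s g (+) s h.
Hypothesis lam_cocycle : forall g h k : gT,
  lam h k (+) lam (g * h)%g k (+) lam g (h * k)%g (+) lam g h = false.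
Hypothesis lam_norm1 : forall g : gT, lam 1%g g = false.

Definition sign_cocycle : gT -> gT -> C := fun g h => (-1) ^+ lam g h.

Definition Pf_odd_rep (U : gT * bool -> C) : Prop :=
  unimod U /\ U (1%g, false) = 1 /\ U (1%g, true) = -1 /\
  forall x y, U x * conjK (s x.1) (U y) = U (gf_mul lam x y).

Lemma s_hom1 : s 1%g = false.
Proof. by have := s_hom 1%g 1%g; rewrite mulg1; case: (s 1%g). Qed.

Lemma sign_cocycle_UT : is_UT_cocycle s sign_cocycle.
Proof.
split=> [g h | g h k]; first exact: normr_sign.
rewrite /sign_cocycle conjK_sign -!signr_addb.
by move: (lam_cocycle g h k);
  case: (lam h k); case: (lam (g * h)%g k); case: (lam g (h * k)%g);
  case: (lam g h).
Qed.

Lemma Pf_odd_rep_signE (U : gT * bool -> C) :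
  Pf_odd_rep U -> forall g b, U (g, b) = (-1) ^+ b * U (g, false).
Proof.
case=> _ [_ [UPf Umul]] g []; last by rewrite mul1r.
have := Umul (1%g, true) (g, false).
by rewrite /gf_mul /= mul1g lam_norm1 s_hom1 /conjK UPf.
Qed.

Lemma Pf_odd_rep_coboundary (U : gT * bool -> C) :
  Pf_odd_rep U -> is_UT_coboundary s sign_cocycle.
Proof.
move=> U_rep; have [U_unimod [_ [_ Umul]]] := U_rep.
exists (fun g => U (g, false)); split=> [g | g h]; first exact: U_unimod.
rewrite (Umul (g, false) (h, false)) /gf_mul /= (Pf_odd_rep_signE U_rep).
by rewrite mulfK // unimod_neq0.
Qed.

Lemma coboundary_Pf_odd_rep :
  is_UT_coboundary s sign_cocycle -> exists U, Pf_odd_rep U.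
Proof.
move=> [eps [eps_unimod eps_cobound]].
have eps_mul g h : eps g * conjK (s g) (eps h) = sign_cocycle g h * eps (g * h)%g.
  by rewrite eps_cobound divfK // unimod_neq0.
have eps1 : eps 1%g = 1.
  have := eps_cobound 1%g 1%g.
  by rewrite /sign_cocycle lam_norm1 s_hom1 /conjK mulg1 mulfK ?unimod_neq0.
exists (fun x : gT * bool => (-1) ^+ x.2 * eps x.1).
split=> [[g b] | /=]; first by rewrite /= normrM normr_sign eps_unimod mulr1.
rewrite eps1 !mulr1; do 2!split=> //.
move=> [g a] [h b]; rewrite /gf_mul /= conjKM conjK_sign mulr_signM.
by rewrite eps_mul mulrA -signr_addb.
Qed.

Lemma Pf_odd_repP :
  (exists U, Pf_odd_rep U) <-> is_UT_coboundary s sign_cocycle.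
Proof.
by split=> [[U /Pf_odd_rep_coboundary] | /coboundary_Pf_odd_rep].
Qed.

End SignCocycle.

Theorem mainTheorem1 (R : realType) (gT : finGroupType)
  (s : gT -> bool) (lam : gT -> gT -> bool)
  (s_hom : forall g h : gT, s (g * h)%g = s g (+) s h)
  (lam_cocycle : forall g h k : gT,
     lam h k (+) lam (g * h)%g k (+) lam g (h * k)%g (+) lam g h = false)
  (lam_norm1 : forall g : gT, lam 1%g g = false)
  (lam_norm2 : forall g : gT, lam g 1%g = false) :
  (~ exists U : gT * bool -> R[i],
       unimod U /\ U (1%g, false) = 1 /\ U (1%g, true) = -1 /\
       forall x y : gT * bool,
         U x * conjK (s x.1) (U y) = U (gf_mul lam x y))
  <->
  nontrivial_H2_class s (fun g h : gT => (-1 : R[i]) ^+ lam g h).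
Proof.
(* [lam_norm2] is redundant: [lam_cocycle] at (g, 1, 1) and [lam_norm1] imply it. *)
have cocycle := sign_cocycle_UT R[i] s lam_cocycle.
have repP := Pf_odd_repP R[i] s_hom lam_norm1.
rewrite /sign_cocycle /Pf_odd_rep in cocycle repP.
split=> [no_rep | [_ not_cobound] rep].
- by split=> // /repP.
- exact/not_cobound/repP.
Qed.
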